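(* Let $N$ be a natural number. For any two sets $A,B\subseteq{}^N2$, we have $A\subseteq B$ if and only if $\Delta(B)\preceq\Delta(A)$.
   Context: $N=\{0,\ldots,N-1\}$; ${}^N2$ is the set of all functions $N\to\{0,1\}$, and ${}^{\underline N}2$ is the set of all partial functions $\sigma$ with $\mathrm{dom}(\sigma)\subseteq N$ and values in $\{0,1\}$ (functions are sets of ordered pairs; the empty function is included). For $\sigma\in{}^{\underline N}2$, $[\sigma]=\{f\in{}^N2:\sigma\subseteq f\}$. For $A\subseteq{}^N2$, $\Delta(A)=\{\sigma\in{}^{\underline N}2: [\sigma]\cap A=\emptyset \text{ and } [\rho]\cap A\neq\emptyset \text{ for all } \rho\subsetneq\sigma\}$. For $\delta_1,\delta_2\subseteq{}^{\underline N}2$, $\delta_1\preceq\delta_2$ means that for every $\sigma\in\delta_1$ there is $\rho\in\delta_2$ with $\rho\subseteq\sigma$. *)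

From mathcomp Require Import all_boot.
Set Implicit Arguments. Unset Strict Implicit. Unset Printing Implicit Defensive.

(* ^N 2 : total functions N -> {0,1}; booleans encode {0,1}. *)
Definition tfun (N : nat) := {ffun 'I_N -> bool}.
(* ^{underline N} 2 : partial functions N -> {0,1}; [None] = undefined. *)
Definition pfun (N : nat) := {ffun 'I_N -> option bool}.

Definition psub N (s t : pfun N) : bool :=
  [forall i, if s i is Some b then t i == Some b else true].

Definition pssub N (r s : pfun N) : bool := psub r s && (r != s).

Definition ext N (s : pfun N) (f : tfun N) : bool :=
  [forall i, if s i is Some b then f i == b else true].

Definition Delta N (A : {set tfun N}) : {set pfun N} :=
  [set s | [forall f, ext s f ==> (f \notin A)] &&
           [forall r, pssub r s ==> [exists f, ext r f && (f \in A)]]].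

Definition prec N (d1 d2 : {set pfun N}) : Prop :=
  forall s, s \in d1 -> exists2 r, r \in d2 & psub r s.

From mathcomp Require Import all_boot.

Set Implicit Arguments. Unset Strict Implicit. Unset Printing Implicit Defensive.

(* If the cylinder [s] misses a set A, then so does the cylinder of some
   inclusion-minimal restriction of s, and that restriction lies in Δ(A).
   Hence Δ(A) covers every partial function missing A. For A ⊆ B each element
   of Δ(B) misses A, which gives Δ(B) ⪯ Δ(A). Conversely, if f ∈ A \ B then f,
   viewed as a total partial function, misses B; it extends some s ∈ Δ(B),
   which extends some r ∈ Δ(A), and then f ∈ [r] ∩ A, contradicting r ∈ Δ(A). *)

Section PartialFunctions.

Variable N : nat.
Implicit Types (r s t : pfun N) (f g : tfun N) (A B : {set tfun N}).

Lemma psub_refl s : psub s s.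
Proof. by apply/forallP => i; case: (s i). Qed.

Lemma psub_trans r s t : psub r s -> psub s t -> psub r t.
Proof.
move=> /forallP rs /forallP st; apply/forallP => i.
by move: (rs i) (st i); case: (r i) => // b /eqP ->.
Qed.

Lemma ext_psub r s f : psub r s -> ext s f -> ext r f.
Proof.
move=> /forallP rs /forallP sf; apply/forallP => i.
by move: (rs i) (sf i); case: (r i) => // b /eqP ->.
Qed.

Definition dom s : {set 'I_N} := [set i | s i != None].

Lemma psub_dom r s : psub r s -> dom r \subset dom s.
Proof.
move=> /forallP rs; apply/subsetP => i; rewrite !inE.
by move: (rs i); case: (r i) => // b /eqP ->.
Qed.

Lemma psub_dom_eq r s : psub r s -> dom s \subset dom r -> r = s.
Proof.
move=> /forallP rs /subsetP sr; apply/ffunP => i.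
move: (rs i) (sr i); rewrite !inE; case: (r i) => [b /eqP //|_].
by case: (s i) => // b /(_ isT).
Qed.

Lemma pssub_card_dom r s : pssub r s -> #|dom r| < #|dom s|.
Proof.
case/andP=> rs r_neq_s; rewrite (ltn_leqif (subset_leqif_card (psub_dom rs))).
by apply: contra r_neq_s => sr; apply/eqP/(psub_dom_eq rs).
Qed.

Definition tot f : pfun N := [ffun i => Some (f i)].

Lemma ext_tot f g : ext (tot f) g = (g == f).
Proof.
apply/forallP/eqP => [fg|-> i]; last by rewrite ffunE.
by apply/ffunP => i; move: (fg i); rewrite ffunE => /eqP.
Qed.

Definition avoids A s := [forall f, ext s f ==> (f \notin A)].

Lemma avoidsP A s : reflect (forall f, ext s f -> f \notin A) (avoids A s).
Proof. by apply: (iffP forallP) => sA f; apply/implyP; apply: sA. Qed.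

Lemma DeltaP A s :
  reflect (avoids A s /\ forall r, pssub r s -> ~~ avoids A r) (s \in Delta A).
Proof.
rewrite inE; apply: (iffP andP) => -[sA min_s]; split=> //.
- move=> r rs; have /existsP[f /andP[rf fA]] := implyP (forallP min_s r) rs.
  by apply/avoidsP => /(_ f rf); rewrite fA.
- apply/forallP => r; apply/implyP => /min_s; apply: contraR => /existsPn rA.
  by apply/avoidsP => f rf; move: (rA f); rewrite rf.
Qed.

Lemma avoids_subset A B s : A \subset B -> avoids B s -> avoids A s.
Proof.
move=> /subsetP AB /avoidsP sB; apply/avoidsP => f /sB.
by apply: contra => /AB.
Qed.

Lemma Delta_below A s : avoids A s -> exists2 r, r \in Delta A & psub r s.
Proof.
move=> sA; pose P := [pred r | psub r s && avoids A r].
have Ps : P s by rewrite inE psub_refl.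
case: (arg_minnP (fun r => #|dom r|) Ps) => r /andP[rs rA] r_min.
exists r => //; apply/DeltaP; split=> // q qr; apply/negP => qA.
have qs : psub q s by apply: psub_trans rs; case/andP: qr.
by have := pssub_card_dom qr; rewrite ltnNge r_min // inE qs qA.
Qed.

End PartialFunctions.

Theorem theorem6p9 (N : nat) (A B : {set tfun N}) :
  A \subset B <-> prec (Delta B) (Delta A).
Proof.
split=> [AB s /DeltaP[sB _] | DeltaBA].
  exact/Delta_below/(avoids_subset AB).
apply/subsetP => f fA; apply: contraT => fB.
have totB : avoids B (tot f) by apply/avoidsP => g; rewrite ext_tot => /eqP ->.
have [s /DeltaBA[r /DeltaP[/avoidsP rA _] rs] sf] := Delta_below totB.
have rf : ext r f by apply: ext_psub (psub_trans rs sf) _; rewrite ext_tot.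
by move: (rA f rf); rewrite fA.
Qed.
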